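(* Let $k\in\mathbb{N}$, $x\ge1$ and $V\ge x^{1/k}$. Then for every $n\in\mathbb{N}$ with $n\le x$, \[ \mathbf{1}_{\mathbb{P}}(n)=\sum_{j=1}^k(-1)^{j-1}\binom kj\big(\mu_{\le V}^{*j}*\mathbf{1}^{*(j-1)}*\omega\big)(n). \]
   Context: $\mathbf{1}_{\mathbb{P}}$ is the indicator function of the primes; $\mu$ is the Möbius function and $\mu_{\le V}(n):=\mu(n)$ if $n\le V$ and $0$ otherwise; $\mathbf{1}(n)=1$ for all $n$; $\omega(n)$ is the number of distinct prime divisors of $n$. $*$ is Dirichlet convolution, $g^{*j}$ is the $j$-fold convolution of $g$ with itself, and $g^{*0}$ is the identity $\delta$ ($\delta(1)=1$, $\delta(n)=0$ for $n>1$). *)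

From HB Require Import structures.
From mathcomp Require Import all_boot all_order all_algebra.
From mathcomp Require Import reals exp.
Set Implicit Arguments. Unset Strict Implicit. Unset Printing Implicit Defensive.
Import Order.TTheory GRing.Theory Num.Theory.
Local Open Scope ring_scope.

(* Arithmetic functions: nat -> int; only values at n >= 1 matter. *)
Definition arith := nat -> int.

Definition dconv (f g : arith) : arith :=
  fun n => \sum_(d <- divisors n) f d * g (n %/ d)%N.

Definition delta : arith := fun n => (n == 1%N)%:Z.

Definition dpow (f : arith) (j : nat) : arith := iter j (dconv f) delta.

Definition one_fn : arith := fun _ => 1.

Definition ind_prime : arith := fun n => (prime n)%:Z.

Definition omega : arith := fun n => (size (primes n))%:Z.

Definition moebius : arith := fun n =>
  if n == 0%N then 0
  else if all (fun pe : nat * nat => pe.2 == 1%N) (prime_decomp n)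
       then (-1) ^+ size (primes n) else 0.

Definition mu_le (R : realType) (V : R) : arith :=
  fun n => if n%:R <= V then moebius n else 0.

(* Work with arithmetic functions restricted to [1, n], where Dirichlet
   convolution is a commutative ring product.  There omega = 1_P * 1, so the
   j-th summand is G^j * 1_P with G := mu_{<=V} * 1.  Since G agrees with delta
   on [1, V], 1 - G vanishes on [1, V], hence (1 - G)^k on [1, V^k], which
   contains [1, x].  By the binomial theorem the right-hand side is
   (1 - (1 - G)^k) * 1_P, whose value at n <= x is therefore 1_P(n). *)

From HB Require Import structures.
From mathcomp Require Import all_boot all_order all_algebra.
From mathcomp Require Import reals exp.
From mathcomp Require Import ring.
Set Implicit Arguments. Unset Strict Implicit. Unset Printing Implicit Defensive.
Import Order.TTheory GRing.Theory Num.Theory.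
Local Open Scope ring_scope.

Section OrdinalSums.
Variables (A : nmodType) (N : nat).

Lemma sum_ordS_eq (F : nat -> A) (m : nat) : (0 < m <= N.+1)%N ->
  \sum_(e < N.+1) F e.+1 *+ (e.+1 == m) = F m.
Proof.
case/andP=> m_gt0 m_le; have m1_lt : (m.-1 < N.+1)%N by rewrite prednK.
rewrite (bigD1 (Ordinal m1_lt)) //= prednK // eqxx mulr1n big1 ?addr0 // => e.
by rewrite -val_eqE /= -(inj_eq succn_inj) prednK // => /negbTE ->.
Qed.

Lemma sum_ordS_eq_muln (x : A) (u v m : nat) : (0 < m <= N.+1)%N ->
  \sum_(e < N.+1) x *+ (v == e.+1) *+ (e.+1 * u == m)%N = x *+ (v * u == m)%N.
Proof.
move=> /andP[m_gt0 m_le]; have [vu_m | vu_m] := eqVneq (v * u)%N m; last first.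
  rewrite big1 // => e _.
  by case: eqP => [<-|_]; rewrite ?(negbTE vu_m) ?mulr0n ?mul0rn.
have /andP[v_gt0 u_gt0] : (0 < v)%N && (0 < u)%N by rewrite -muln_gt0 vu_m.
have v_le : (v <= N.+1)%N by rewrite (leq_trans _ m_le) // -vu_m leq_pmulr.
under eq_bigr => e _ do rewrite mulrnAC [v == _]eq_sym.
by rewrite (sum_ordS_eq (fun w => x *+ (w * u == m)%N)) ?v_gt0 ?vu_m ?eqxx.
Qed.

Lemma sum_ordS_cofactor (F : nat -> A) (a m : nat) : (0 < a)%N -> (0 < m <= N.+1)%N ->
  \sum_(b < N.+1) F b.+1 *+ (a * b.+1 == m)%N = F (m %/ a)%N *+ (a %| m)%N.
Proof.
move=> a_gt0 /andP[m_gt0 m_le]; have [a_dvd | a_ndvd] := boolP (a %| m)%N; last first.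
  rewrite mulr0n big1 // => b _; case: eqP => [ab_m | _]; last exact: mulr0n.
  by move: a_ndvd; rewrite -ab_m dvdn_mulr.
under eq_bigr => b _ do rewrite mulnC -(eqn_div _ a_gt0 a_dvd).
rewrite sum_ordS_eq // divn_gt0 // dvdn_leq //=.
exact: leq_trans (leq_div m a) m_le.
Qed.

Lemma big_divisors_ord (F : nat -> A) (m : nat) : (0 < m <= N.+1)%N ->
  \sum_(d <- divisors m) F d = \sum_(a < N.+1) F a.+1 *+ (a.+1 %| m)%N.
Proof.
move=> /andP[m_gt0 m_le].
have -> : divisors m = [seq d <- iota 1 N.+1 | (d %| m)%N].
  apply: (irr_sorted_eq ltn_trans ltnn); first exact: sorted_divisors_ltn.
    exact/sorted_filter/iota_ltn_sorted/ltn_trans.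
  move=> d; rewrite mem_filter mem_iota -dvdn_divisors //.
  have [d_dvd | //] := boolP (d %| m)%N.
  by rewrite add1n ltnS (dvdn_gt0 m_gt0) // (leq_trans (dvdn_leq m_gt0 d_dvd)).
rewrite big_filter big_mkcond -(addn0 1%N) iotaDl big_map -val_enum_ord big_map enumT.
by apply: eq_bigr => a _; rewrite mulrb add1n.
Qed.

End OrdinalSums.

(* Functions on 'I_N.+1, the index a standing for the integer a.+1.  A divisor
   of an integer in [1, N+1] lies again in [1, N+1], so Dirichlet convolution
   restricts to a commutative ring structure on these truncated functions. *)
Section TruncatedDirichletRing.
Variables (A : comNzRingType) (N : nat).

Definition tdir := {ffun 'I_N.+1 -> A}.
HB.instance Definition _ := GRing.Zmodule.on tdir.

Definition tdir_mul (f g : tdir) : tdir := [ffun i : 'I_N.+1 =>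
  \sum_(a < N.+1) \sum_(b < N.+1) (f a * g b) *+ (a.+1 * b.+1 == i.+1)%N].

Definition tdir_one : tdir := [ffun i : 'I_N.+1 => (i == 0 :> nat)%:R].

Lemma tdir_mulC : commutative tdir_mul.
Proof.
move=> f g; apply/ffunP => i; rewrite !ffunE exchange_big /=.
by apply: eq_bigr => a _; apply: eq_bigr => b _; rewrite mulnC mulrC.
Qed.

Lemma tdir_mul3E (f g h : tdir) i : tdir_mul (tdir_mul f g) h i =
  \sum_(a < N.+1) \sum_(b < N.+1) \sum_(c < N.+1)
    (f a * g b * h c) *+ (a.+1 * b.+1 * c.+1 == i.+1)%N.
Proof.
rewrite ffunE.
transitivity (\sum_(e < N.+1) \sum_(c < N.+1) \sum_(a < N.+1) \sum_(b < N.+1)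
  (f a * g b * h c) *+ (a.+1 * b.+1 == e.+1)%N *+ (e.+1 * c.+1 == i.+1)%N).
  apply: eq_bigr => e _; apply: eq_bigr => c _.
  rewrite ffunE mulr_suml -sumrMnl; apply: eq_bigr => a _.
  rewrite mulr_suml -sumrMnl; apply: eq_bigr => b _.
  by rewrite mulrnAl.
rewrite exchange_big /=; under eq_bigr => c _ do rewrite exchange_big /=.
under eq_bigr => c _ do under eq_bigr => a _ do rewrite exchange_big /=.
rewrite exchange_big /=; under eq_bigr => a _ do rewrite exchange_big /=.
apply: eq_bigr => a _; apply: eq_bigr => b _; apply: eq_bigr => c _.
by rewrite sum_ordS_eq_muln ?ltn_ord.
Qed.

Lemma tdir_mulA : associative tdir_mul.
Proof.
move=> f g h; apply/ffunP => i.
rewrite tdir_mulC !tdir_mul3E; under eq_bigr => b _ do rewrite exchange_big /=.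
rewrite exchange_big /=; apply: eq_bigr => a _; apply: eq_bigr => b _.
apply: eq_bigr => c _; congr (_ *+ nat_of_bool _); first by rewrite mulrC mulrA.
by rewrite mulnC mulnA.
Qed.

Lemma tdir_mul1 : left_id tdir_one tdir_mul.
Proof.
move=> g; apply/ffunP => i.
rewrite ffunE big_ord_recl [X in _ + X]big1 ?addr0 => [|a _]; last first.
  by rewrite big1 // => b _; rewrite ffunE mul0r mul0rn.
rewrite (bigD1 i) //= ffunE mul1r mul1n eqxx mulr1n big1 ?addr0 // => b.
by move=> /negbTE b_neq_i; rewrite mul1n eqSS val_eqE b_neq_i mulr0n.
Qed.

Lemma tdir_mulDl : left_distributive tdir_mul +%R.
Proof.
move=> f g h; apply/ffunP => i; rewrite !ffunE -big_split.
apply: eq_bigr => a _; rewrite -big_split; apply: eq_bigr => b _.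
by rewrite ffunE mulrDl mulrnDl.
Qed.

Lemma tdir_one_neq0 : tdir_one != 0.
Proof. by apply/eqP => /ffunP /(_ ord0); rewrite !ffunE; apply/eqP/oner_neq0. Qed.

HB.instance Definition _ := GRing.Zmodule_isComNzRing.Build tdir
  tdir_mulA tdir_mulC tdir_mul1 tdir_mulDl tdir_one_neq0.

End TruncatedDirichletRing.

Lemma tdir_mulE (A : comNzRingType) N (f g : tdir A N) i : (f * g) i =
  \sum_(a < N.+1) \sum_(b < N.+1) (f a * g b) *+ (a.+1 * b.+1 == i.+1)%N.
Proof. exact: ffunE. Qed.

Section Vanishing.
Variables (A : comNzRingType) (N : nat) (R : realDomainType).

Definition vanishes_upto (f : tdir A N) (t : R) :=
  forall a : 'I_N.+1, (a.+1)%:R <= t -> f a = 0.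

Lemma vanishes_uptoMr (f g : tdir A N) t :
  vanishes_upto f t -> vanishes_upto (f * g) t.
Proof.
move=> f0 i le_i; rewrite tdir_mulE big1 // => a _; rewrite big1 // => b _.
have [ab_i | _] := eqVneq (a.+1 * b.+1)%N i.+1; last exact: mulr0n.
by rewrite f0 ?mul0r ?mul0rn // (le_trans _ le_i) // ler_nat -ab_i leq_pmulr.
Qed.

Lemma vanishes_uptoM (f g : tdir A N) s t : 0 <= s -> 0 <= t ->
  vanishes_upto f s -> vanishes_upto g t -> vanishes_upto (f * g) (s * t).
Proof.
move=> s_ge0 t_ge0 f0 g0 i le_i; rewrite tdir_mulE big1 // => a _.
rewrite big1 // => b _.
have [ab_i | _] := eqVneq (a.+1 * b.+1)%N i.+1; last exact: mulr0n.
have [/f0 -> | s_lt] := lerP (a.+1)%:R s; first by rewrite mul0r mul0rn.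
have [/g0 -> | t_lt] := lerP (b.+1)%:R t; first by rewrite mulr0 mul0rn.
by move: le_i; rewrite -ab_i natrM leNgt ltr_pM.
Qed.

Lemma vanishes_uptoX (f : tdir A N) t k : 0 <= t -> (0 < k)%N ->
  vanishes_upto f t -> vanishes_upto (f ^+ k) (t ^+ k).
Proof.
move=> t_ge0 + f0; elim: k => // [[_ _ | k IHk _]]; first by rewrite !expr1.
rewrite [f ^+ _]exprS [t ^+ _]exprS.
by apply: vanishes_uptoM => //; [apply: exprn_ge0 | apply: IHk].
Qed.

End Vanishing.

Definition tdir_of N (f : arith) : tdir int N := [ffun i : 'I_N.+1 => f i.+1].

Lemma tdir_of_dconv N f g : tdir_of N (dconv f g) = tdir_of N f * tdir_of N g.
Proof.
apply/ffunP => i; rewrite tdir_mulE ffunE /dconv (@big_divisors_ord _ N) ?ltn_ord //.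
apply: eq_bigr => a _; under eq_bigr => b _ do rewrite !ffunE -mulrnAr.
by rewrite -mulr_sumr (sum_ordS_cofactor g) ?ltn_ord ?mulrnAr.
Qed.

Lemma tdir_of_delta N : tdir_of N delta = 1.
Proof. by apply/ffunP => i; rewrite !ffunE /delta eqSS natz. Qed.

Lemma tdir_of_dpow N f j : tdir_of N (dpow f j) = tdir_of N f ^+ j.
Proof.
elim: j => [|j IHj]; first exact: tdir_of_delta.
by rewrite exprS -IHj /dpow iterS tdir_of_dconv.
Qed.

Lemma perm_primes_primeM p d : prime p -> (0 < d)%N -> ~~ (p %| d)%N ->
  perm_eq (primes (p * d)) (p :: primes d).
Proof.
move=> p_pr d_gt0 p_ndvd; apply: uniq_perm; first exact: primes_uniq.
  by rewrite /= primes_uniq mem_primes p_pr d_gt0 p_ndvd.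
by move=> q; rewrite primesM ?(prime_gt0 p_pr) // primes_prime // inE.
Qed.

Lemma moebiusE n : (0 < n)%N -> moebius n =
  if all (fun p => logn p n == 1)%N (primes n) then (-1) ^+ size (primes n) else 0.
Proof. by move=> n_gt0; rewrite /moebius eqn0Ngt n_gt0 prime_decompE all_map. Qed.

Lemma moebius_primeM p d : prime p -> (0 < d)%N ->
  moebius (p * d)%N = if (p %| d)%N then 0 else - moebius d.
Proof.
move=> p_pr d_gt0; have p_gt0 := prime_gt0 p_pr.
have logn_pd q : logn q (p * d) = ((q == p) + logn q d)%N.
  by rewrite lognM // logn_prime.
rewrite !moebiusE ?muln_gt0 ?p_gt0 //.
have [p_dvd | p_ndvd] := boolP (p %| d)%N.
  case: allP => // /(_ p); rewrite mem_primes p_pr muln_gt0 p_gt0 d_gt0 dvdn_mulr //.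
  rewrite logn_pd eqxx add1n eqSS eqn0Ngt logn_gt0 mem_primes p_pr d_gt0 p_dvd.
  by move=> /(_ isT).
have primes_pd := perm_primes_primeM p_pr d_gt0 p_ndvd.
have logn_pd_0 : logn p d = 0%N.
  by apply/eqP; rewrite -leqn0 leqNgt logn_gt0 mem_primes p_pr d_gt0 p_ndvd.
rewrite (perm_all _ primes_pd) (perm_size primes_pd) /= logn_pd eqxx logn_pd_0 /=.
rewrite (@eq_in_all _ _ (fun q => logn q d == 1)%N); last first.
  move=> q; rewrite mem_primes logn_pd => /and3P[_ _ q_dvd].
  have [q_p | //] := eqVneq q p.
  by move: p_ndvd; rewrite -q_p q_dvd.
by case: all; rewrite ?oppr0 // exprS mulN1r.
Qed.

Lemma perm_filter_dvd_divisors p m : (0 < p)%N -> (0 < m)%N -> (p %| m)%N ->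
  perm_eq [seq d <- divisors m | (p %| d)%N] (map (muln p) (divisors (m %/ p))).
Proof.
move=> p_gt0 m_gt0 p_dvd; have mp_gt0 : (0 < m %/ p)%N by rewrite divn_gt0 // dvdn_leq.
apply: uniq_perm; first by rewrite filter_uniq ?divisors_uniq.
  by rewrite map_inj_uniq ?divisors_uniq // => e e' /eqP; rewrite eqn_pmul2l // => /eqP.
move=> d; rewrite mem_filter -dvdn_divisors //; apply/andP/mapP => [[p_d d_m] | [e]].
  exists (d %/ p)%N; last by rewrite mulnC divnK.
  by rewrite -dvdn_divisors // -(dvdn_pmul2r p_gt0) !divnK.
rewrite -dvdn_divisors // => e_dvd ->; split; first exact: dvdn_mulr.
by rewrite -(divnK p_dvd) [(_ * p)%N]mulnC dvdn_pmul2l.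
Qed.

Lemma filter_ndvd_divisors p m : prime p -> (0 < m)%N -> (p %| m)%N ->
  [seq d <- divisors m | ~~ (p %| d)%N] = [seq d <- divisors (m %/ p) | ~~ (p %| d)%N].
Proof.
move=> p_pr m_gt0 p_dvd.
have mp_gt0 : (0 < m %/ p)%N by rewrite divn_gt0 ?prime_gt0 // dvdn_leq.
apply: (irr_sorted_eq ltn_trans ltnn).
- exact/sorted_filter/sorted_divisors_ltn/ltn_trans.
- exact/sorted_filter/sorted_divisors_ltn/ltn_trans.
move=> d; rewrite !mem_filter -!dvdn_divisors //; have [//|p_ndvd /=] := boolP (p %| d)%N.
apply/idP/idP => [d_m | /dvdn_trans -> //]; last exact: dvdn_div.
have : coprime d p by rewrite coprime_sym prime_coprime.
by move/Gauss_dvdl <-; rewrite divnK.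
Qed.

Lemma sum_moebius_divisors m : (0 < m)%N ->
  \sum_(d <- divisors m) moebius d = (m == 1)%N%:Z.
Proof.
move=> m_gt0; have [m_le1 | m_gt1] := leqP m 1.
  have -> : m = 1%N by apply/eqP; rewrite eqn_leq m_le1.
  by rewrite (_ : divisors 1 = [:: 1%N]) ?big_seq1.
have p_pr := pdiv_prime m_gt1; have p_dvd := pdiv_dvd m; set p := pdiv m in p_pr p_dvd *.
have mp_gt0 : (0 < m %/ p)%N by rewrite divn_gt0 ?prime_gt0 // dvdn_leq.
rewrite (gtn_eqF m_gt1) (bigID (dvdn p)) /= -big_filter -[X in _ + X]big_filter.
rewrite (perm_big _ (perm_filter_dvd_divisors (prime_gt0 p_pr) m_gt0 p_dvd)) big_map.
rewrite (filter_ndvd_divisors p_pr m_gt0 p_dvd) big_filter.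
rewrite (eq_big_seq (fun d => if ~~ (p %| d)%N then - moebius d else 0)).
  by rewrite -big_mkcond sumrN addNr.
move=> d; rewrite -dvdn_divisors // => /(dvdn_gt0 mp_gt0) d_gt0.
by rewrite moebius_primeM //; case: ifP.
Qed.

Lemma dconv_mu_le_one (R : realType) (V : R) m : (0 < m)%N -> m%:R <= V ->
  dconv (mu_le V) one_fn m = delta m.
Proof.
move=> m_gt0 m_le; rewrite /dconv (eq_big_seq moebius) ?sum_moebius_divisors //.
move=> d; rewrite -dvdn_divisors // => d_dvd.
by rewrite /mu_le /one_fn mulr1 (le_trans _ m_le) // ler_nat dvdn_leq.
Qed.

Lemma vanishes_upto_mu_le (R : realType) (V : R) N :
  vanishes_upto (1 - tdir_of N (mu_le V) * tdir_of N one_fn) V.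
Proof.
move=> a a_le; rewrite -tdir_of_dconv -tdir_of_delta !ffunE.
by rewrite dconv_mu_le_one ?subrr.
Qed.

Lemma omega_dconv m : (0 < m)%N -> omega m = dconv ind_prime one_fn m.
Proof.
move=> m_gt0; rewrite /omega /dconv.
have -> : primes m = [seq d <- divisors m | prime d].
  apply: (irr_sorted_eq ltn_trans ltnn); first exact: sorted_primes.
    exact/sorted_filter/sorted_divisors_ltn/ltn_trans.
  by move=> d; rewrite mem_filter mem_primes -dvdn_divisors // m_gt0 andbC.
rewrite size_filter; elim: (divisors m) => [|d s IHs]; first by rewrite big_nil.
by rewrite big_cons -IHs /ind_prime /one_fn mulr1 /= PoszD.
Qed.

Lemma tdir_of_omega N : tdir_of N omega = tdir_of N ind_prime * tdir_of N one_fn.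
Proof. by rewrite -tdir_of_dconv; apply/ffunP => a; rewrite !ffunE omega_dconv. Qed.

Lemma tdir_of_dpow_omega N f j : (0 < j)%N ->
  tdir_of N (dconv (dconv (dpow f j) (dpow one_fn j.-1)) omega) =
  (tdir_of N f * tdir_of N one_fn) ^+ j * tdir_of N ind_prime.
Proof.
case: j => // j _; rewrite !tdir_of_dconv !tdir_of_dpow tdir_of_omega.
by rewrite mulrA mulrAC -exprS -(mulrA _ _ (tdir_of N one_fn)) -exprSr -exprMn.
Qed.

Lemma sum_alternating_binomial (R : comPzRingType) (G : R) k :
  \sum_(1 <= j < k.+1) G ^+ j *~ ((-1) ^+ j.-1 * ('C(k, j))%:Z) = 1 - (1 - G) ^+ k.
Proof.
rewrite [1 - G]addrC exprD1n big_ord_recl expr0 bin0 mulr1n.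
rewrite opprD addrA subrr add0r -sumrN.
rewrite big_add1 big_mkord; apply: eq_bigr => j _.
rewrite -mulrzr intrM intr_sign -pmulrn -mulr_natr lift0 [(- G) ^+ _]exprNn.
by rewrite [(-1) ^+ j.+1]exprS /=; ring.
Qed.

Lemma root_le_exprn (R : realType) (k : nat) (x V : R) :
  (0 < k)%N -> 0 <= x -> x `^ k%:R^-1 <= V -> x <= V ^+ k.
Proof.
move=> k_gt0 x_ge0 root_le; have kR_neq0 : k%:R != 0 :> R by rewrite pnatr_eq0 -lt0n.
rewrite -[x](powRr1 x_ge0) -(mulVf kR_neq0) powRrM powR_mulrn ?powR_ge0 //.
by rewrite lerXn2r ?nnegrE ?powR_ge0 // (le_trans (powR_ge0 _ _) root_le).
Qed.

Unset Implicit Arguments.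
Set Strict Implicit.

Theorem lemma5p4 (R : realType) (k : nat) (x V : R) :
  (1 <= k)%N -> 1 <= x -> x `^ (k%:R^-1) <= V ->
  forall n : nat, (0 < n)%N -> n%:R <= x ->
  ind_prime n =
  \sum_(1 <= j < k.+1)
     (-1) ^+ (j.-1) * ('C(k, j))%:Z *
     dconv (dconv (dpow (mu_le V) j) (dpow one_fn j.-1)) omega n.
Proof.
move=> k_gt0 x_ge1 root_le n n_gt0 n_le_x.
have x_ge0 : 0 <= x := le_trans ler01 x_ge1.
have V_ge0 : 0 <= V := le_trans (powR_ge0 _ _) root_le.
pose i : 'I_n.+1 := inord n.-1.
have i_val : i.+1 = n by rewrite inordK ?prednK // ltnS leq_pred.
set G := tdir_of n (mu_le V) * tdir_of n one_fn; set P := tdir_of n ind_prime.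
have x_le : x <= V ^+ k := root_le_exprn k_gt0 x_ge0 root_le.
have vanish : vanishes_upto ((1 - G) ^+ k * P) x.
  move=> a /le_trans/(_ x_le); apply: vanishes_uptoMr.
  exact: vanishes_uptoX V_ge0 k_gt0 (vanishes_upto_mu_le (V := V) (N := n)).
have sumE : \sum_(1 <= j < k.+1) (G ^+ j * P) *~ ((-1) ^+ j.-1 * 'C(k, j)%:Z)
    = P - (1 - G) ^+ k * P.
  under eq_bigr => j _ do rewrite -mulrzAl.
  by rewrite -mulr_suml sum_alternating_binomial mulrBl mul1r.
rewrite (eq_big_nat _ _
  (F2 := fun j => ((G ^+ j * P) *~ ((-1) ^+ j.-1 * 'C(k, j)%:Z)) i)).
  rewrite -sum_ffunE sumE ffunE [X in _ + X]ffunE vanish ?i_val // subr0.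
  by rewrite ffunE i_val.
move=> j /andP[j_gt0 _].
by rewrite ffunMzE -tdir_of_dpow_omega // ffunE i_val -mulrzl intz.
Qed.
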